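(* Let $R$ be a ring and $R\le S=R[s_1,\dots,s_k]$ a ring extension generated as an $R$-algebra by elements $s_1,\dots,s_k\in S$ that commute with each other and satisfy $s_iR\subseteq Rs_i$ for all $i$. If $M$ is an $S$-module that is finitely presented as an $R$-module, then $M$ is finitely presented as an $S$-module. *)

From HB Require Import structures.
From mathcomp Require Import all_boot all_order all_algebra.
Set Implicit Arguments. Unset Strict Implicit. Unset Printing Implicit Defensive.
Import GRing.Theory.
Local Open Scope ring_scope.

Definition fin_presented (A : pzRingType) (M : zmodType) (act : A -> M -> M)
  : Prop :=
  exists (n : nat) (g : 'I_n -> M),
    (forall x : M, exists a : 'I_n -> A, x = \sum_(i < n) act (a i) (g i)) /\
    exists (p : nat) (rel : 'I_p -> 'I_n -> A),
      (forall j : 'I_p, \sum_(i < n) act (rel j i) (g i) = 0) /\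
      (forall a : 'I_n -> A, \sum_(i < n) act (a i) (g i) = 0 ->
         exists c : 'I_p -> A,
           forall i : 'I_n, a i = \sum_(j < p) c j * rel j i).

(* S = R[s_1, ..., s_k]: S is generated as a ring by the image of R
   (under the embedding phi) together with s_1, ..., s_k, i.e. every
   subring of S containing phi(R) and the s_i is all of S. *)
Definition ring_generated (R S : pzRingType) (phi : R -> S) (k : nat)
  (s : 'I_k -> S) : Prop :=
  forall P : S -> Prop,
    P 1 ->
    (forall x y, P x -> P y -> P (x - y)) ->
    (forall x y, P x -> P y -> P (x * y)) ->
    (forall r, P (phi r)) ->
    (forall i, P (s i)) ->
    forall x, P x.

From HB Require Import structures.
From mathcomp Require Import all_boot all_order all_algebra.
Set Implicit Arguments. Unset Strict Implicit. Unset Printing Implicit Defensive.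
Import GRing.Theory.
Local Open Scope ring_scope.

(* Keep the R-generators g_1, ..., g_n of M. Over S they satisfy the
   R-relations and, for every generator s_l and every i, a relation
   s_l g_i = sum_m a_lim g_m expressing s_l g_i as an R-combination.
   Modulo the S-span N of these relations, every vector of S^n is congruent
   to a vector with entries in R: since s_l R is contained in R s_l, the
   class of vectors x e_i r (r in R) reducible in this way is closed under
   differences and products, so by induction over the generation of S it
   contains everything. A vector of the S-kernel of S^n -> M therefore
   differs by an element of N from an R-vector that lies in the R-kernel,
   which is spanned by the R-relations. *)

Lemma subrACA (V : zmodType) (a b c d : V) : a - b - (c - d) = a - c - (b - d).
Proof. by rewrite !opprB addrACA [in RHS]addrACA [- c + _]addrC. Qed.

Definition delta (S : pzRingType) (n : nat) (i0 : 'I_n) (y : S) (i : 'I_n) :=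
  if i0 == i then y else 0.

Lemma sum_delta_scale (S : pzRingType) (M : lmodType S) (n : nat)
    (g : 'I_n -> M) (i0 : 'I_n) (y : S) :
  \sum_i delta i0 y i *: g i = y *: g i0.
Proof.
rewrite (bigD1 i0) //= /delta eqxx big1 ?addr0 // => i /negbTE.
by rewrite eq_sym => ->; rewrite scale0r.
Qed.

Section LeftSpan.

Variables (S : pzRingType) (T : finType) (n : nat) (rows : T -> 'I_n -> S).

Definition lspan (v : 'I_n -> S) :=
  exists c : T -> S, forall i, v i = \sum_t c t * rows t i.

Lemma lspan_eq v w : v =1 w -> lspan w -> lspan v.
Proof. by move=> vw [c Hc]; exists c => i; rewrite vw. Qed.

Lemma lspan_row t : lspan (rows t).
Proof.
exists (fun t' => if t' == t then 1 else 0) => i.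
rewrite (bigD1 t) //= eqxx mul1r big1 ?addr0 // => t' /negbTE ->.
by rewrite mul0r.
Qed.

Lemma lspan0 : lspan (fun _ => 0).
Proof. by exists (fun _ => 0) => i; rewrite big1 // => t _; rewrite mul0r. Qed.

Lemma lspanZ x v : lspan v -> lspan (fun i => x * v i).
Proof.
move=> [c Hc]; exists (fun t => x * c t) => i.
by rewrite Hc mulr_sumr; apply: eq_bigr => t _; rewrite mulrA.
Qed.

Lemma lspanD v w : lspan v -> lspan w -> lspan (fun i => v i + w i).
Proof.
move=> [c Hc] [d Hd]; exists (fun t => c t + d t) => i.
by rewrite Hc Hd -big_split; apply: eq_bigr => t _; rewrite mulrDl.
Qed.

Lemma lspanB v w : lspan v -> lspan w -> lspan (fun i => v i - w i).
Proof.
move=> [c Hc] [d Hd]; exists (fun t => c t - d t) => i.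
by rewrite Hc Hd -sumrB; apply: eq_bigr => t _; rewrite mulrBl.
Qed.

Lemma lspan_sum (F : 'I_n -> 'I_n -> S) :
  (forall m, lspan (F m)) -> lspan (fun i => \sum_m F m i).
Proof.
move=> /fin_all_exists[c Hc]; exists (fun t => \sum_m c m t) => i.
rewrite (eq_bigr _ (fun m _ => Hc m i)) exchange_big.
by apply: eq_bigr => t _; rewrite mulr_suml.
Qed.

Lemma lspan_comb0 (M : lmodType S) (g : 'I_n -> M) v :
  (forall t, \sum_i rows t i *: g i = 0) ->
  lspan v -> \sum_i v i *: g i = 0.
Proof.
move=> rows0 [c Hc]; under eq_bigr do rewrite Hc scaler_suml.
rewrite exchange_big big1 // => t _.
by under eq_bigr do rewrite -scalerA; rewrite -scaler_sumr rows0 scaler0.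
Qed.

End LeftSpan.

Definition addrows (S : pzRingType) (n : nat) (T1 T2 : finType)
    (rows1 : T1 -> 'I_n -> S) (rows2 : T2 -> 'I_n -> S) (t : T1 + T2) :=
  match t with inl t1 => rows1 t1 | inr t2 => rows2 t2 end.

Section AddRows.

Variables (S : pzRingType) (n : nat) (T1 T2 : finType).
Variables (rows1 : T1 -> 'I_n -> S) (rows2 : T2 -> 'I_n -> S).

Lemma lspan_addrowsl v : lspan rows1 v -> lspan (addrows rows1 rows2) v.
Proof.
move=> [c Hc]; exists (fun t => if t is inl t1 then c t1 else 0) => i.
rewrite Hc big_sumType /= [X in _ + X]big1 ?addr0 // => t _.
by rewrite mul0r.
Qed.

Lemma lspan_addrowsr v : lspan rows2 v -> lspan (addrows rows1 rows2) v.
Proof.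
move=> [c Hc]; exists (fun t => if t is inr t2 then c t2 else 0) => i.
rewrite Hc big_sumType /= [X in X + _]big1 ?add0r // => t _.
by rewrite mul0r.
Qed.

End AddRows.

Lemma lspan_rmorph (R S : pzRingType) (phi : {rmorphism R -> S}) (n : nat)
    (T : finType) (rows : T -> 'I_n -> R) (v : 'I_n -> R) :
  lspan rows v -> lspan (fun t i => phi (rows t i)) (fun i => phi (v i)).
Proof.
move=> [c Hc]; exists (fun t => phi (c t)) => i.
by rewrite Hc rmorph_sum; apply: eq_bigr => t _; rewrite rmorphM.
Qed.

Lemma fin_presented_of_lspan (S : pzRingType) (M : lmodType S) (n : nat)
    (g : 'I_n -> M) (T : finType) (rows : T -> 'I_n -> S) :
  (forall x : M, exists a : 'I_n -> S, x = \sum_i a i *: g i) ->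
  (forall t, \sum_i rows t i *: g i = 0) ->
  (forall v, \sum_i v i *: g i = 0 -> lspan rows v) ->
  fin_presented (fun (a : S) (m : M) => a *: m).
Proof.
move=> g_span rows0 ker_span; exists n, g; split=> //.
exists #|T|, (fun j => rows (enum_val j)); split=> [j|v /ker_span[c Hc]].
  exact: rows0.
exists (fun j => c (enum_val j)) => i.
by rewrite Hc -(big_enum_val (fun t => c t * rows t i)).
Qed.

Section Reduction.

Variables (R S : pzRingType) (phi : {rmorphism R -> S}).
Variables (k : nat) (s : 'I_k -> S).
Hypothesis Hgen : ring_generated phi s.
Hypothesis Hnorm : forall (l : 'I_k) (r : R), exists r', s l * phi r = phi r' * s l.

Variables (n : nat) (T : finType) (rows : T -> 'I_n -> S).
Variable a : 'I_k -> 'I_n -> 'I_n -> R.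
Hypothesis lspan_shift :
  forall l i0, lspan rows (fun i => delta i0 (s l) i - phi (a l i0 i)).

Definition reducible (v : 'I_n -> S) :=
  exists b : 'I_n -> R, lspan rows (fun i => v i - phi (b i)).

Lemma reducible_delta x r i0 : reducible (delta i0 (x * phi r)).
Proof.
move: x r i0; apply: Hgen => [r i0|x y Hx Hy r i0|x y Hx Hy r i0|r' r i0|l r i0].
- exists (delta i0 r); apply: lspan_eq (lspan0 rows) => i.
  by rewrite /delta; case: (i0 == i); rewrite ?mul1r ?rmorph0 subrr.
- have [[bx Hbx] [by' Hby]] := (Hx r i0, Hy r i0).
  exists (fun i => bx i - by' i); apply: lspan_eq (lspanB Hbx Hby) => i.
  rewrite /delta rmorphB -subrACA.
  by case: (i0 == i); rewrite ?mulrBl ?subr0.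
- (* (x y) r e_i0 = x (y r e_i0), and y r e_i0 reduces to sum_m b_m e_m. *)
  have [b Hb] := Hy r i0.
  have [b' Hb'] := fin_all_exists (fun m => Hx (b m) m).
  exists (fun i => \sum_m b' m i).
  apply: lspan_eq (lspanD (lspanZ x Hb) (lspan_sum Hb')) => i.
  rewrite rmorph_sum sumrB /delta -big_mkcond big_pred1_eq mulrBr.
  by case: (i0 == i); rewrite ?mulrA ?mulr0 addrA subrK.
- exists (delta i0 (r' * r)); apply: lspan_eq (lspan0 rows) => i.
  by rewrite /delta; case: (i0 == i); rewrite ?rmorphM ?rmorph0 subrr.
- have [r' Hr'] := Hnorm l r.
  exists (fun i => r' * a l i0 i).
  apply: lspan_eq (lspanZ (phi r') (lspan_shift l i0)) => i.
  by rewrite /delta Hr' rmorphM mulrBr; case: (i0 == i); rewrite ?mulr0.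
Qed.

Lemma reducible_all v : reducible v.
Proof.
have [b Hb] := fin_all_exists (fun i0 => reducible_delta (v i0) 1 i0).
exists (fun i => \sum_i0 b i0 i); apply: lspan_eq (lspan_sum Hb) => i.
by rewrite sumrB rmorph_sum /delta -big_mkcond big_pred1_eq rmorph1 mulr1.
Qed.

End Reduction.

Theorem mainTheorem11 (R S : pzRingType) (phi : {rmorphism R -> S})
  (phi_inj : injective phi) (k : nat) (s : 'I_k -> S)
  (Hgen : ring_generated phi s)
  (Hcomm : forall i j : 'I_k, s i * s j = s j * s i)
  (Hnorm : forall (i : 'I_k) (r : R), exists r' : R, s i * phi r = phi r' * s i)
  (M : lmodType S)
  (HfpR : fin_presented (fun (r : R) (m : M) => phi r *: m)) :
  fin_presented (fun (a : S) (m : M) => a *: m).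
Proof.
case: HfpR => n [g [g_span [p [rel [rel0 rel_ker]]]]].
have [a Ha] : exists a : 'I_k -> 'I_n -> 'I_n -> R,
    forall l i0, s l *: g i0 = \sum_m phi (a l i0 m) *: g m.
  suff /fin_all_exists[a Ha] l : exists al : 'I_n -> 'I_n -> R,
      forall i0, s l *: g i0 = \sum_m phi (al i0 m) *: g m by exists a.
  exact: fin_all_exists (fun i0 => g_span _).
pose shift (li : 'I_k * 'I_n) i := delta li.2 (s li.1) i - phi (a li.1 li.2 i).
pose rows := addrows (fun j i => phi (rel j i)) shift.
have rows0 t : \sum_i rows t i *: g i = 0.
  case: t => [j | [l i0]]; first exact: rel0.
  under eq_bigr do rewrite scalerBl.
  by rewrite sumrB sum_delta_scale Ha subrr.
apply: (fin_presented_of_lspan (g := g) (rows := rows)) => //.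
  by move=> x; have [c ->] := g_span x; exists (fun i => phi (c i)).
move=> v v0; have [b Hb] : reducible phi rows v.
  apply: (reducible_all Hgen Hnorm (a := a)) => l i0.
  exact/lspan_addrowsr/(lspan_row shift (l, i0)).
have b0 : \sum_i phi (b i) *: g i = 0.
  have := lspan_comb0 rows0 Hb; under eq_bigr do rewrite scalerBl.
  by rewrite sumrB v0 sub0r => /eqP; rewrite oppr_eq0 => /eqP.
have Hphib : lspan rows (fun i => phi (b i)).
  exact/lspan_addrowsl/lspan_rmorph/rel_ker.
by apply: lspan_eq (lspanD Hb Hphib) => i; rewrite subrK.
Qed.
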